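(* The function $g$ has a unique fixed point in $[0,\infty)$, namely $g^*=J_\lambda(0,0)$: $g(g^* )=g^*$, and $g(h)\neq h$ for every $h\ge0$ with $h\neq g^*$.
   Context: Fix $p\in(0,1)$, $q\in[0,1]$, $\lambda>0$. $\mathbb{Z}_+=\{0,1,2,\dots\}$. Let $d:[0,\infty)\to\mathbb{R}$ satisfy: (C1) $d(0)>0$; (C2) $d$ is convex and increasing; (C3) for every $\delta>0$, $r\mapsto d(r+\delta)-d(r)$ increases to $\infty$ as $r\to\infty$. Write $d(x,y):=d(\sqrt{x^2+y^2})$ for $(x,y)\in\mathbb{R}^2$, and assume (C4): $d(x,y)$ is positive, twice continuously partially differentiable, with $d_{xx},d_{xy},d_{yy}>0$ for all $x,y\ge0$. Set $\Delta_1(m,n)=d(m+1,n)-d(m,n)$, $\Delta_2(m,n)=d(m,n+1)-d(m,n)$, $\Delta_q(m,n)=q\Delta_1(m,n)+(1-q)\Delta_2(m,n)$ for $(m,n)\in\mathbb{Z}_+^2$. Relay placement MDP: the state space is $\{(m,n,z):(m,n)\in\mathbb{Z}_+^2,\ z\in\{\mathsf e,\mathsf c\}\}\cup\{\phi\}$ ($(m,n)$ is the displacement of the deploying agent from the last placed relay, or from the origin if none; $z=\mathsf e$ means the lattice path has ended, $z=\mathsf c$ that it continues). Actions $u\in\{0,1\}$ ($u=1$: place a relay). From $(m,n,\mathsf c)$ with $u=0$ the next state is $(m+1,n,\mathsf c)$ w.p. $(1-p)q$, $(m+1,n,\mathsf e)$ w.p. $pq$, $(m,n+1,\mathsf c)$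 w.p. $(1-p)(1-q)$, $(m,n+1,\mathsf e)$ w.p. $p(1-q)$; with $u=1$ it is $(1,0,\mathsf c)$, $(1,0,\mathsf e)$, $(0,1,\mathsf c)$, $(0,1,\mathsf e)$ with these same respective probabilities. At $(m,n,\mathsf e)$ only $u=1$ is allowed and the next state is the absorbing cost-free state $\phi$. One-step cost: $d(m,n)$ at $(m,n,\mathsf e)$; $\lambda+d(m,n)$ if $u=1$ at $(m,n,\mathsf c)$; $0$ otherwise. The deployment starts in state $(0,0,\mathsf c)$. $J_\lambda(m,n)$ is the optimal expected total cost (infimum over all, possibly history-dependent and randomized, policies) starting from $(m,n,\mathsf c)$, and $g^*:=J_\lambda(0,0)$. For $h\ge 0$ let $\mathcal{P}(h)=\{(m,n)\in\mathbb{Z}_+^2: p(\lambda+h)\le\Delta_q(m,n)\}$ and $\mathcal{P}^c(h)=\mathbb{Z}_+^2\setminus\mathcal{P}(h)$. Let $g(h)\in[0,\infty]$ be the expected total cost, starting from $(0,0,\mathsf c)$, of the stationary policy that in state $(m,n,\mathsf c)$ places a relay ($u=1$) if and only if $(m,n)\in\mathcal{P}(h)$. *)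

From Stdlib Require Import Reals List.
Open Scope R_scope.

Definition convex_on_nonneg (d : R -> R) : Prop :=
  forall x y t, 0 <= x -> 0 <= y -> 0 <= t <= 1 ->
    d (t * x + (1 - t) * y) <= t * d x + (1 - t) * d y.

Definition increasing_on_nonneg (d : R -> R) : Prop :=
  forall x y, 0 <= x -> x < y -> d x < d y.

Definition C3 (d : R -> R) : Prop :=
  forall delta, 0 < delta ->
    (forall r1 r2, 0 <= r1 -> r1 <= r2 ->
        d (r1 + delta) - d r1 <= d (r2 + delta) - d r2) /\
    (forall M, exists R0, forall r, R0 <= r -> M < d (r + delta) - d r).

Definition d2 (d : R -> R) (x y : R) : R := d (sqrt (x ^ 2 + y ^ 2)).

Definition cont2_at (F : R -> R -> R) (x y : R) : Prop :=
  forall eps, 0 < eps -> exists delta, 0 < delta /\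
    forall x' y', Rabs (x' - x) < delta -> Rabs (y' - y) < delta ->
      Rabs (F x' y' - F x y) < eps.

Definition C4 (d : R -> R) : Prop :=
  (forall x y, 0 <= x -> 0 <= y -> 0 < d2 d x y) /\
  exists Fx Fy Fxx Fxy Fyx Fyy : R -> R -> R,
    forall x y, 0 < x -> 0 < y ->
      derivable_pt_lim (fun t => d2 d t y) x (Fx x y) /\
      derivable_pt_lim (fun t => d2 d x t) y (Fy x y) /\
      derivable_pt_lim (fun t => Fx t y) x (Fxx x y) /\
      derivable_pt_lim (fun t => Fx x t) y (Fxy x y) /\
      derivable_pt_lim (fun t => Fy t y) x (Fyx x y) /\
      derivable_pt_lim (fun t => Fy x t) y (Fyy x y) /\
      cont2_at Fx x y /\ cont2_at Fy x y /\
      cont2_at Fxx x y /\ cont2_at Fxy x y /\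
      cont2_at Fyx x y /\ cont2_at Fyy x y /\
      0 < Fxx x y /\ 0 < Fxy x y /\ 0 < Fyy x y.

Definition dd (d : R -> R) (m n : nat) : R := d2 d (INR m) (INR n).
Definition Delta1 (d : R -> R) (m n : nat) : R := dd d (S m) n - dd d m n.
Definition Delta2 (d : R -> R) (m n : nat) : R := dd d m (S n) - dd d m n.
Definition Deltaq (d : R -> R) (q : R) (m n : nat) : R :=
  q * Delta1 d m n + (1 - q) * Delta2 d m n.

(* Cont m n = (m,n,c), Ended m n = (m,n,e), Phi = absorbing state *)
Inductive state : Type :=
| Cont (m n : nat)
| Ended (m n : nat)
| Phi.

(* A history: the past (state, action) pairs, most recent first
   (action true = u=1, place a relay). *)
Definition history := list (state * bool).

(* A general (history-dependent, randomized) policy: given the past history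
   and the current state, the probability of choosing u=1. *)
Definition policy := history -> state -> R.

Definition valid_policy (pol : policy) : Prop :=
  forall h s, 0 <= pol h s <= 1.

(* Expected cost of the next N steps under policy pol, given past history
   hist and current state s.  At (m,n,e) only u=1 is allowed (forced). *)
Fixpoint Vfin (d : R -> R) (p q lam : R) (pol : policy) (N : nat)
  (hist : history) (s : state) {struct N} : R :=
  match N with
  | O => 0
  | S N' =>
    let step (h : history) (i j : nat) : R :=
        (1 - p) * q * Vfin d p q lam pol N' h (Cont (S i) j)
      + p * q * Vfin d p q lam pol N' h (Ended (S i) j)
      + (1 - p) * (1 - q) * Vfin d p q lam pol N' h (Cont i (S j))
      + p * (1 - q) * Vfin d p q lam pol N' h (Ended i (S j)) in
    match s with
    | Phi => 0
    | Ended m n => dd d m n + Vfin d p q lam pol N' ((s, true) :: hist) Phi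
    | Cont m n =>
      let a := pol hist s in
      a * (lam + dd d m n + step ((s, true) :: hist) 0%nat 0%nat)
      + (1 - a) * step ((s, false) :: hist) m n
    end
  end.

(* The expected total cost of pol from (m,n,c) is the finite real v:
   the (nondecreasing) N-step expected costs converge to v.  When the
   expected total cost is +oo, no v satisfies this. *)
Definition total_cost_is (d : R -> R) (p q lam : R) (pol : policy)
  (m n : nat) (v : R) : Prop :=
  Un_cv (fun N => Vfin d p q lam pol N nil (Cont m n)) v.

Definition is_J (d : R -> R) (p q lam : R) (m n : nat) (v : R) : Prop :=
  (forall pol, valid_policy pol ->
     forall c, total_cost_is d p q lam pol m n c -> v <= c) /\
  (forall eps, 0 < eps -> exists pol, valid_policy pol /\
     exists c, total_cost_is d p q lam pol m n c /\ c < v + eps).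

(* The stationary threshold policy: place a relay at (m,n,c) iff
   (m,n) in P(h), i.e. p(lambda+h) <= Delta_q(m,n). *)
Definition thr_policy (d : R -> R) (p q lam h : R) : policy :=
  fun _ s => match s with
             | Cont m n => if Rle_dec (p * (lam + h)) (Deltaq d q m n)
                           then 1 else 0
             | _ => 0
             end.

Definition g_is (d : R -> R) (p q lam h v : R) : Prop :=
  total_cost_is d p q lam (thr_policy d p q lam h) 0 0 v.

(* For a "restart cost" G, let X h G (m,n) be the cost-to-go of the threshold-h
   policy from (m,n,c) when every relay placement costs λ + d(m,n) + G, and let
   Y h G be the expected cost after the first step from the origin.  By (C2) and
   (C4) the marginal cost Δ_q is monotone, so the placement region P(h) is closed
   under moves; by (C3) it contains every reachable point beyond some level, so X
   is given by a finite recursion.  Y h is affine in G with slope in [0,1-p], and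
   threshold h is optimal for restart cost h, so fixmap h := Y h h is
   nondecreasing and (1-p)-Lipschitz: it has exactly one fixed point hs ≥ 0. *)

From Pilot Require Import Defs.
From Stdlib Require Import Reals Lra Lia ClassicalEpsilon.
(* Re-import Defs so that its [d2] shadows the Stdlib differential-calculus field of that name. *)
Import Pilot.Defs.
Open Scope list_scope.
Open Scope R_scope.

Lemma sqrt_le_of_sq (A B : R) : 0 <= B -> A <= B * B -> sqrt A <= B.
Proof.
  intros HB H. rewrite <- (sqrt_square B HB). now apply sqrt_le_1_alt.
Qed.

Lemma sq_le_sqrt (A B : R) : 0 <= B -> B * B <= A -> B <= sqrt A.
Proof.
  intros HB H. rewrite <- (sqrt_square B HB). now apply sqrt_le_1_alt.
Qed.

(* The lattice points reachable from the origin with positive probability: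
   if q = 1 the agent only moves right, if q = 0 only up. *)
Definition reachable (q : R) (m n : nat) : Prop :=
  (q = 1 -> n = 0%nat) /\ (q = 0 -> m = 0%nat).

Lemma reachable_origin q : reachable q 0 0.
Proof. split; auto. Qed.

Lemma reachable_right q m n : reachable q m n -> q <> 0 -> reachable q (S m) n.
Proof. intros [H1 H2] H. split; auto. intro; contradiction. Qed.

Lemma reachable_up q m n : reachable q m n -> q <> 1 -> reachable q m (S n).
Proof. intros [H1 H2] H. split; auto. intro; contradiction. Qed.

Lemma Un_cv_pow x : 0 <= x < 1 -> Un_cv (fun N => x ^ N) 0.
Proof.
  intros Hx eps Heps.
  destruct (pow_lt_1_zero x ltac:(rewrite Rabs_right; lra) eps Heps) as [N HN].
  exists N. intros n Hn. unfold R_dist. rewrite Rminus_0_r. now apply HN.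
Qed.

Lemma Un_cv_const c : Un_cv (fun _ => c) c.
Proof.
  intros eps Heps. exists 0%nat. intros n _. unfold R_dist.
  replace (c - c) with 0 by ring. rewrite Rabs_R0. lra.
Qed.

Lemma Un_cv_geometric_error (u : nat -> R) l B x : 0 <= x < 1 ->
  (forall N, Rabs (u (S N) - l) <= B * x ^ N) -> Un_cv u l.
Proof.
  intros Hx Hu. apply CV_shift with 1%nat. intros eps Heps.
  assert (HB : 0 < Rabs B + 1) by (pose proof (Rabs_pos B); lra).
  destruct (Un_cv_pow x Hx (eps / (Rabs B + 1))) as [N HN];
    [apply Rdiv_lt_0_compat; lra|].
  exists N. intros n Hn. specialize (HN n Hn). unfold R_dist in *.
  rewrite Rminus_0_r, Rabs_right in HN by (apply Rle_ge, pow_le; lra).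
  rewrite Nat.add_1_r. eapply Rle_lt_trans; [apply Hu|].
  pose proof (pow_le x n ltac:(lra)). pose proof (Rle_abs B).
  apply Rle_lt_trans with ((Rabs B + 1) * x ^ n); [nra|].
  apply (Rmult_lt_compat_l (Rabs B + 1)) in HN; [|lra].
  replace ((Rabs B + 1) * (eps / (Rabs B + 1))) with eps in HN by (field; lra). lra.
Qed.

Section CostGeometry.
Variable d : R -> R.
Hypothesis Hd0 : 0 < d 0.
Hypothesis Hconv : convex_on_nonneg d.
Hypothesis Hinc : increasing_on_nonneg d.

Lemma d_mono x y : 0 <= x -> x <= y -> d x <= d y.
Proof.
  intros Hx Hxy. destruct (Rle_lt_or_eq_dec _ _ Hxy) as [h|h].
  - left; now apply Hinc.
  - subst; lra.
Qed.

Lemma d_chord r t : 0 <= r -> 0 <= t <= 1 -> d (r + t) <= d r + t * (d (r + 1) - d r).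
Proof.
  intros Hr Ht. pose proof (Hconv (r + 1) r t ltac:(lra) Hr Ht) as Hc.
  replace (t * (r + 1) + (1 - t) * r) with (r + t) in Hc by ring. lra.
Qed.

Lemma dd_pos m n : 0 < dd d m n.
Proof.
  eapply Rlt_le_trans; [apply Hd0|]. apply d_mono; [lra|apply sqrt_pos].
Qed.

Lemma d2_mono x y x' y' :
  0 <= x -> x <= x' -> 0 <= y -> y <= y' -> d2 d x y <= d2 d x' y'.
Proof. intros. apply d_mono; [apply sqrt_pos|apply sqrt_le_1_alt; nra]. Qed.

Lemma dd_mono m n m' n' : (m <= m')%nat -> (n <= n')%nat -> dd d m n <= dd d m' n'.
Proof. intros. apply d2_mono; try apply pos_INR; now apply le_INR. Qed.

Lemma dd_sym m n : dd d m n = dd d n m.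
Proof. unfold dd, d2. now rewrite Rplus_comm. Qed.

Lemma Delta2_sym m n : Delta2 d m n = Delta1 d n m.
Proof. unfold Delta1, Delta2. now rewrite (dd_sym m (S n)), (dd_sym m n). Qed.

Lemma Delta1_nonneg m n : 0 <= Delta1 d m n.
Proof. unfold Delta1. pose proof (dd_mono m n (S m) n ltac:(lia) ltac:(lia)). lra. Qed.

Lemma Delta2_nonneg m n : 0 <= Delta2 d m n.
Proof. rewrite Delta2_sym. apply Delta1_nonneg. Qed.

(* Convexity of r ↦ d(r) and of the Euclidean norm: the increment in the
   first coordinate grows along that coordinate. *)
Lemma Delta1_mono m n : Delta1 d m n <= Delta1 d (S m) n.
Proof.
  unfold Delta1, dd, d2. rewrite !S_INR.
  set (x := INR m). set (y := INR n).
  assert (Hx : 0 <= x) by apply pos_INR. assert (Hy : 0 <= y) by apply pos_INR.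
  set (a := sqrt (x ^ 2 + y ^ 2)). set (b := sqrt ((x + 1 + 1) ^ 2 + y ^ 2)).
  assert (Ha : a * a = x ^ 2 + y ^ 2) by (apply sqrt_sqrt; nra).
  assert (Hb : b * b = (x + 1 + 1) ^ 2 + y ^ 2) by (apply sqrt_sqrt; nra).
  assert (Ha0 : 0 <= a) by apply sqrt_pos. assert (Hb0 : 0 <= b) by apply sqrt_pos.
  (* Cauchy–Schwarz: (x, y)·(x+2, y) ≤ |(x,y)| |(x+2,y)| *)
  assert (Hcs : x * (x + 2) + y * y <= a * b).
  { apply Rsqr_incr_0_var; [unfold Rsqr|nra].
    replace (a * b * (a * b)) with ((a * a) * (b * b)) by ring. rewrite Ha, Hb. nra. }
  assert (Hmid : sqrt ((x + 1) ^ 2 + y ^ 2) <= (a + b) / 2)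
    by (apply sqrt_le_of_sq; nra).
  assert (Hc : d ((a + b) / 2) <= (d a + d b) / 2).
  { pose proof (Hconv a b (1/2) Ha0 Hb0 ltac:(lra)) as Hc.
    replace (1 / 2 * a + (1 - 1 / 2) * b) with ((a + b) / 2) in Hc by field. lra. }
  pose proof (d_mono _ _ (sqrt_pos ((x + 1) ^ 2 + y ^ 2)) Hmid). lra.
Qed.

Lemma Delta2_mono m n : Delta2 d m n <= Delta2 d m (S n).
Proof. rewrite !Delta2_sym. apply Delta1_mono. Qed.

(* Positive mixed derivative (C4): on the open quadrant, the x-increment of
   d(x,y) is strictly increasing in y (two applications of the mean value theorem). *)
Lemma increment_increasing_open (HC4 : C4 d) x0 x1 y0 y1 :
  0 < x0 -> x0 < x1 -> 0 < y0 -> y0 < y1 ->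
  d2 d x1 y0 - d2 d x0 y0 < d2 d x1 y1 - d2 d x0 y1.
Proof.
  intros Hx0 Hx Hy0 Hy.
  destruct HC4 as [_ [Fx [Fy [Fxx [Fxy [Fyx [Fyy H]]]]]]].
  assert (HFx : forall x, 0 < x -> Fx x y0 < Fx x y1).
  { intros x Hxp.
    destruct (MVT_cor2 (fun t => Fx x t) (Fxy x) y0 y1 Hy) as [c [Hc1 Hc2]].
    { intros c Hc. apply (H x c Hxp ltac:(lra)). }
    assert (0 < Fxy x c) by apply (H x c Hxp ltac:(lra)).
    assert (0 < Fxy x c * (y1 - y0)) by (apply Rmult_lt_0_compat; lra). lra. }
  destruct (MVT_cor2 (fun t => d2 d t y1 - d2 d t y0) (fun t => Fx t y1 - Fx t y0) x0 x1 Hx)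
    as [c [Hc1 Hc2]].
  { intros c Hc. apply derivable_pt_lim_minus; apply H; lra. }
  pose proof (HFx c ltac:(lra)).
  assert (0 < (Fx c y1 - Fx c y0) * (x1 - x0)) by (apply Rmult_lt_0_compat; lra). lra.
Qed.

(* The discrete mixed difference of d on the lattice is nonnegative.  (C4) only
   speaks about the open quadrant, so we shift the lower corner inward by e > 0
   and control the error with the chord bound [d_chord]. *)
Lemma mixed_difference_nonneg (HC4 : C4 d) m n :
  0 <= dd d (S m) (S n) - dd d m (S n) - dd d (S m) n + dd d m n.
Proof.
  unfold dd. rewrite !S_INR.
  set (x := INR m). set (y := INR n).
  assert (Hx : 0 <= x) by apply pos_INR. assert (Hy : 0 <= y) by apply pos_INR.
  set (D := d2 d (x + 1) (y + 1) - d2 d x (y + 1) - d2 d (x + 1) y + d2 d x y).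
  destruct (Rle_lt_dec 0 D) as [h|HD]; auto. exfalso.
  set (r := sqrt (x ^ 2 + y ^ 2)).
  assert (Hr : r * r = x ^ 2 + y ^ 2) by (apply sqrt_sqrt; nra).
  assert (Hr0 : 0 <= r) by apply sqrt_pos.
  set (K := d (r + 1) - d r).
  assert (HK : 0 <= K) by (unfold K; pose proof (d_mono r (r + 1) Hr0 ltac:(lra)); lra).
  set (e := Rmin (1/4) ((- D) / (2 * (K + 1)))).
  assert (He0 : 0 < e) by (apply Rmin_pos; [lra|apply Rdiv_lt_0_compat; lra]).
  assert (He1 : e <= 1/4) by apply Rmin_l.
  assert (He2 : 2 * e * K <= - D).
  { assert (e * (2 * (K + 1)) <= - D).
    { apply (Rmult_le_reg_r (/ (2 * (K + 1)))); [apply Rinv_0_lt_compat; lra|].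
      rewrite Rmult_assoc, Rinv_r by lra. rewrite Rmult_1_r. apply Rmin_r. }
    nra. }
  pose proof (increment_increasing_open HC4 (x + e) (x + 1) (y + e) (y + 1)
     ltac:(lra) ltac:(lra) ltac:(lra) ltac:(lra)) as Hm.
  assert (H1 : d2 d x (y + 1) <= d2 d (x + e) (y + 1)) by (apply d2_mono; lra).
  assert (H2 : d2 d (x + 1) y <= d2 d (x + 1) (y + e)) by (apply d2_mono; lra).
  assert (H3 : d2 d (x + e) (y + e) <= d2 d x y + 2 * e * K).
  { assert (Hxr : x <= r) by (apply sq_le_sqrt; nra).
    assert (Hyr : y <= r) by (apply sq_le_sqrt; nra).
    assert (Hs : sqrt ((x + e) ^ 2 + (y + e) ^ 2) <= r + 2 * e)
      by (apply sqrt_le_of_sq; nra).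
    pose proof (d_mono _ _ (sqrt_pos _) Hs).
    pose proof (d_chord r (2 * e) Hr0 ltac:(lra)).
    change (d2 d x y) with (d r). unfold d2, K. lra. }
  unfold D in He2. lra.
Qed.

(* Monotonicity of the marginal cost Δ_q in both coordinates: the placement
   region P(h) is closed under moving right and up. *)
Lemma Deltaq_mono (HC4 : C4 d) q (Hq : 0 <= q <= 1) m n :
  Deltaq d q m n <= Deltaq d q (S m) n /\ Deltaq d q m n <= Deltaq d q m (S n).
Proof.
  pose proof (mixed_difference_nonneg HC4 m n).
  pose proof (Delta1_mono m n). pose proof (Delta2_mono m n).
  assert (Delta2 d m n <= Delta2 d (S m) n) by (unfold Delta2; lra).
  assert (Delta1 d m n <= Delta1 d m (S n)) by (unfold Delta1; lra).
  unfold Deltaq. split; nra.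
Qed.

Lemma Delta1_large (HC3 : C3 d) M :
  exists R0, forall m n, (n <= m)%nat -> R0 <= INR m -> M < Delta1 d m n.
Proof.
  destruct (HC3 (1/2) ltac:(lra)) as [_ H]. destruct (H M) as [R0 HR0].
  exists R0. intros m n Hnm Hm.
  unfold Delta1, dd, d2. rewrite S_INR.
  set (x := INR m). set (y := INR n).
  assert (Hx : 0 <= x) by apply pos_INR. assert (Hy : 0 <= y) by apply pos_INR.
  assert (Hyx : y <= x) by (now apply le_INR).
  set (r := sqrt (x ^ 2 + y ^ 2)).
  assert (Hr : r * r = x ^ 2 + y ^ 2) by (apply sqrt_sqrt; nra).
  assert (Hr0 : 0 <= r) by apply sqrt_pos.
  assert (Hxr : x <= r) by (apply sq_le_sqrt; nra).
  assert (Hr2 : r <= 2 * x) by (apply sqrt_le_of_sq; nra).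
  assert (Hs : r + 1/2 <= sqrt ((x + 1) ^ 2 + y ^ 2)) by (apply sq_le_sqrt; nra).
  pose proof (d_mono (r + 1/2) _ ltac:(lra) Hs).
  pose proof (HR0 r ltac:(unfold x in *; lra)). lra.
Qed.

Lemma Deltaq_large (HC3 : C3 d) q (Hq : 0 <= q <= 1) T :
  exists K, (1 <= K)%nat /\
    forall m n, reachable q m n -> (K <= m + n)%nat -> T <= Deltaq d q m n.
Proof.
  destruct (Delta1_large HC3 ((Rabs T + 1) / q)) as [R1 HR1].
  destruct (Delta1_large HC3 ((Rabs T + 1) / (1 - q))) as [R2 HR2].
  destruct (INR_unbounded (2 * (Rabs R1 + Rabs R2) + 1)) as [K0 HK0].
  exists (S K0). split; [lia|]. intros m n [Hq1 Hq0] HK.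
  assert (Hmn : INR (S K0) <= INR m + INR n) by (rewrite <- plus_INR; now apply le_INR).
  rewrite S_INR in Hmn.
  pose proof (Rle_abs R1). pose proof (Rle_abs R2). pose proof (Rle_abs T).
  pose proof (Rabs_pos R1). pose proof (Rabs_pos R2). pose proof (pos_INR K0).
  pose proof (Delta1_nonneg m n). pose proof (Delta2_nonneg m n).
  unfold Deltaq.
  destruct (Nat.le_gt_cases n m) as [Hnm|Hmn'].
  - (* below the diagonal the horizontal increment is large *)
    destruct (Req_dec q 0) as [q0|q0].
    { specialize (Hq0 q0). subst m. assert (n = 0%nat) by lia. subst n. simpl in Hmn. lra. }
    assert (INR n <= INR m) by (now apply le_INR).
    pose proof (HR1 m n Hnm ltac:(lra)).
    assert (q * ((Rabs T + 1) / q) = Rabs T + 1) by (field; lra).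
    assert (q * ((Rabs T + 1) / q) < q * Delta1 d m n) by (apply Rmult_lt_compat_l; lra).
    assert (0 <= (1 - q) * Delta2 d m n) by (apply Rmult_le_pos; lra). lra.
  - (* above the diagonal the vertical increment is large *)
    destruct (Req_dec q 1) as [q1|q1]; [specialize (Hq1 q1); lia|].
    assert (INR m <= INR n) by (apply le_INR; lia).
    pose proof (HR2 n m ltac:(lia) ltac:(lra)) as Hb. rewrite <- Delta2_sym in Hb.
    assert ((1 - q) * ((Rabs T + 1) / (1 - q)) = Rabs T + 1) by (field; lra).
    assert ((1 - q) * ((Rabs T + 1) / (1 - q)) < (1 - q) * Delta2 d m n)
      by (apply Rmult_lt_compat_l; lra).
    assert (0 <= q * Delta1 d m n) by (apply Rmult_le_pos; lra). lra.
Qed.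

End CostGeometry.

Section RelayMDP.
Variables (d : R -> R) (p q lam : R).
Hypothesis Hp : 0 < p < 1.
Hypothesis Hq : 0 <= q <= 1.
Hypothesis Hlam : 0 < lam.
Hypothesis Hdd_pos : forall m n, 0 < dd d m n.
Hypothesis Hdd_mono :
  forall m n m' n', (m <= m')%nat -> (n <= n')%nat -> dd d m n <= dd d m' n'.
Hypothesis HDeltaq_mono :
  forall m n, Deltaq d q m n <= Deltaq d q (S m) n /\ Deltaq d q m n <= Deltaq d q m (S n).
Hypothesis HDeltaq_large : forall T, exists K, (1 <= K)%nat /\
  forall m n, reachable q m n -> (K <= m + n)%nat -> T <= Deltaq d q m n.

(* Expectation over the four transitions out of a lattice point (i,j):
   continue to (i+1,j), end at (i+1,j), continue to (i,j+1), end at (i,j+1). *)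
Definition comb (A B C D : R) : R :=
  (1 - p) * q * A + p * q * B + (1 - p) * (1 - q) * C + p * (1 - q) * D.

(* Only the moves of positive probability matter. *)
Lemma comb_le A1 B1 C1 D1 A2 B2 C2 D2 :
  (q <> 0 -> A1 <= A2 /\ B1 <= B2) -> (q <> 1 -> C1 <= C2 /\ D1 <= D2) ->
  comb A1 B1 C1 D1 <= comb A2 B2 C2 D2.
Proof.
  intros H1 H2.
  assert (E1 : q * ((1 - p) * A1 + p * B1) <= q * ((1 - p) * A2 + p * B2)).
  { destruct (Req_dec q 0) as [q0|q0]; [rewrite q0; lra|].
    destruct (H1 q0). apply Rmult_le_compat_l; nra. }
  assert (E2 : (1 - q) * ((1 - p) * C1 + p * D1) <= (1 - q) * ((1 - p) * C2 + p * D2)).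
  { destruct (Req_dec q 1) as [q1|q1]; [rewrite q1; lra|].
    destruct (H2 q1). apply Rmult_le_compat_l; nra. }
  unfold comb. nra.
Qed.

Lemma comb_eq A1 B1 C1 D1 A2 B2 C2 D2 :
  (q <> 0 -> A1 = A2 /\ B1 = B2) -> (q <> 1 -> C1 = C2 /\ D1 = D2) ->
  comb A1 B1 C1 D1 = comb A2 B2 C2 D2.
Proof.
  intros H1 H2. apply Rle_antisym; apply comb_le; intro Hq';
    (destruct (H1 Hq') || destruct (H2 Hq')); lra.
Qed.

Lemma comb_const T : comb T T T T = T.
Proof. unfold comb. ring. Qed.

Lemma comb_nonneg A B C D : 0 <= A -> 0 <= B -> 0 <= C -> 0 <= D -> 0 <= comb A B C D.
Proof.
  intros. rewrite <- (comb_const 0). apply comb_le; intros; split; auto.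
Qed.

(* Cost of placing a relay at (m,n) when restarting afterwards costs G. *)
Definition stop_cost (G : R) (m n : nat) : R := lam + dd d m n + G.

Definition cont_cost (Z : nat -> nat -> R) (m n : nat) : R :=
  comb (Z (S m) n) (dd d (S m) n) (Z m (S n)) (dd d m (S n)).

(* One-step look-ahead: continuing once and then stopping beats stopping now
   by exactly p(λ+G) - Δ_q(m,n).  This is what the region P(h) tests. *)
Lemma cont_cost_stop G m n :
  cont_cost (stop_cost G) m n = (1 - p) * (lam + G) + dd d m n + Deltaq d q m n.
Proof. unfold cont_cost, stop_cost, comb, Deltaq, Delta1, Delta2. ring. Qed.

(* Cost-to-go of the threshold-h policy with restart cost G, computed with a
   fuel of k steps (after which the agent is forced to place a relay). *)
Fixpoint Xk (h G : R) (k m n : nat) {struct k} : R :=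
  match k with
  | O => stop_cost G m n
  | S k' => if Rle_dec (p * (lam + h)) (Deltaq d q m n) then stop_cost G m n
            else cont_cost (Xk h G k') m n
  end.

(* Probability, under the same truncated policy, of eventually placing a relay
   (i.e. of paying the restart cost); Xk is affine in G with this slope. *)
Fixpoint Bk (h : R) (k m n : nat) {struct k} : R :=
  match k with
  | O => 1
  | S k' => if Rle_dec (p * (lam + h)) (Deltaq d q m n) then 1
            else comb (Bk h k' (S m) n) 0 (Bk h k' m (S n)) 0
  end.

Lemma Xk_affine h G k : forall m n, Xk h G k m n = Xk h 0 k m n + G * Bk h k m n.
Proof.
  induction k as [|k IH]; intros m n; simpl.
  - unfold stop_cost. ring.
  - destruct Rle_dec.
    + unfold stop_cost. ring.
    + unfold cont_cost, comb. rewrite (IH (S m) n), (IH m (S n)). ring.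
Qed.

Lemma Bk_range h k : forall m n, 0 <= Bk h k m n <= 1.
Proof.
  induction k as [|k IH]; intros m n; simpl; [lra|].
  destruct Rle_dec; [lra|].
  split; [apply comb_nonneg; try lra; apply IH|].
  apply Rle_trans with (comb 1 1 1 1); [|rewrite comb_const; lra].
  apply comb_le; intros; split; try lra; apply IH.
Qed.

Lemma Xk_nonneg h G : 0 <= G -> forall k m n, 0 <= Xk h G k m n.
Proof.
  intros HG k. induction k as [|k IH]; intros m n; simpl;
    [|destruct Rle_dec; [|apply comb_nonneg; auto; apply Rlt_le, Hdd_pos]];
    unfold stop_cost; pose proof (Hdd_pos m n); lra.
Qed.

(* By (C3), beyond some level K every reachable point lies in P(h). *)
Definition stops_beyond (h : R) (K : nat) : Prop := (1 <= K)%nat /\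
  forall m n, reachable q m n -> (K <= m + n)%nat -> p * (lam + h) <= Deltaq d q m n.

Definition level (h : R) : nat := epsilon (inhabits 0%nat) (stops_beyond h).

Lemma level_spec h : stops_beyond h (level h).
Proof. unfold level. apply epsilon_spec, HDeltaq_large. Qed.

Lemma below_level h m n :
  reachable q m n -> ~ p * (lam + h) <= Deltaq d q m n -> (m + n < level h)%nat.
Proof.
  intros Hr HnP. destruct (level_spec h) as [_ HK].
  destruct (Nat.lt_ge_cases (m + n) (level h)) as [l|l]; auto.
  exfalso. apply HnP. now apply HK.
Qed.

Lemma Xk_stable h G : forall k m n, reachable q m n -> (level h <= k + m + n)%nat ->
  Xk h G k m n = Xk h G (S k) m n.
Proof.
  destruct (level_spec h) as [_ HK].
  induction k as [|k IH]; intros m n Hr Hk.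
  - simpl. destruct Rle_dec as [P|nP]; [reflexivity|].
    exfalso. apply nP. apply HK; auto; lia.
  - change (Xk h G (S (S k)) m n) with
      (if Rle_dec (p * (lam + h)) (Deltaq d q m n) then stop_cost G m n
       else cont_cost (Xk h G (S k)) m n).
    simpl. destruct Rle_dec; [reflexivity|].
    apply comb_eq; intro Hq'; split; auto.
    + apply IH; [now apply reachable_right|lia].
    + apply IH; [now apply reachable_up|lia].
Qed.

Definition X (h G : R) (m n : nat) : R := Xk h G (level h) m n.

Lemma X_bellman h G m n : reachable q m n ->
  X h G m n = if Rle_dec (p * (lam + h)) (Deltaq d q m n) then stop_cost G m n
              else cont_cost (X h G) m n.
Proof.
  intro Hr. unfold X. rewrite Xk_stable by (auto; lia). reflexivity.
Qed.

Lemma X_stop h G m n :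
  reachable q m n -> p * (lam + h) <= Deltaq d q m n -> X h G m n = stop_cost G m n.
Proof. intros Hr HP. rewrite X_bellman by auto. now destruct Rle_dec. Qed.

Lemma X_cont h G m n :
  reachable q m n -> ~ p * (lam + h) <= Deltaq d q m n -> X h G m n = cont_cost (X h G) m n.
Proof. intros Hr HP. rewrite X_bellman by auto. now destruct Rle_dec. Qed.

(* P(h) is closed under moves, so continuing from a point of P(h) means
   stopping at the next point. *)
Lemma cont_cost_in_P h G m n : reachable q m n -> p * (lam + h) <= Deltaq d q m n ->
  cont_cost (X h G) m n = (1 - p) * (lam + G) + dd d m n + Deltaq d q m n.
Proof.
  intros Hr HP. rewrite <- cont_cost_stop. apply comb_eq; intro Hq'; split; auto;
    apply X_stop; pose proof (HDeltaq_mono m n).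
  - now apply reachable_right.
  - lra.
  - now apply reachable_up.
  - lra.
Qed.

Lemma X_le_stop h m n : reachable q m n -> X h h m n <= stop_cost h m n.
Proof.
  unfold X. generalize (level h) as k. intros k; revert m n.
  induction k as [|k IH]; intros m n Hr; simpl; [lra|].
  destruct Rle_dec as [P|nP]; [lra|].
  apply Rle_trans with (cont_cost (stop_cost h) m n).
  - apply comb_le; intro Hq'; split; try lra.
    + apply IH. now apply reachable_right.
    + apply IH. now apply reachable_up.
  - rewrite cont_cost_stop. unfold stop_cost. lra.
Qed.

Lemma X_le_cont h m n : reachable q m n -> X h h m n <= cont_cost (X h h) m n.
Proof.
  intro Hr. destruct (Rle_dec (p * (lam + h)) (Deltaq d q m n)) as [P|nP].
  - rewrite X_stop, cont_cost_in_P by auto. unfold stop_cost. lra.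
  - rewrite X_cont at 1 by auto. lra.
Qed.

Lemma subsolution_le_Xk (Z : nat -> nat -> R) G h' :
  (forall m n, reachable q m n -> Z m n <= stop_cost G m n /\ Z m n <= cont_cost Z m n) ->
  forall k m n, reachable q m n -> Z m n <= Xk h' G k m n.
Proof.
  intros HZ k. induction k as [|k IH]; intros m n Hr; simpl; [apply HZ; auto|].
  destruct Rle_dec; [apply HZ; auto|].
  apply Rle_trans with (cont_cost Z m n); [apply HZ; auto|].
  apply comb_le; intro Hq'; split; try lra.
  - apply IH. now apply reachable_right.
  - apply IH. now apply reachable_up.
Qed.

Definition Y (h G : R) : R := cont_cost (X h G) 0 0.

Definition slope (h : R) : R := comb (Bk h (level h) 1 0) 0 (Bk h (level h) 0 1) 0.

Lemma Y_affine h G : Y h G = Y h 0 + G * slope h.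
Proof.
  unfold Y, cont_cost, X, slope, comb.
  rewrite (Xk_affine h G _ 1 0), (Xk_affine h G _ 0 1). ring.
Qed.

(* Each step ends the path with probability p, so a restart happens with
   probability at most 1 - p. *)
Lemma slope_range h : 0 <= slope h <= 1 - p.
Proof.
  pose proof (Bk_range h (level h) 1 0). pose proof (Bk_range h (level h) 0 1).
  assert (0 <= (1 - p) * q) by nra. assert (0 <= (1 - p) * (1 - q)) by nra.
  unfold slope, comb. split; nra.
Qed.

Lemma Y_nonneg_at_0 h : 0 <= Y h 0.
Proof.
  unfold Y, cont_cost. apply comb_nonneg; try (apply Xk_nonneg; lra);
    apply Rlt_le, Hdd_pos.
Qed.

Lemma Y_optimal h h' : Y h h <= Y h' h.
Proof.
  assert (Hsub : forall m n, reachable q m n ->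
            X h h m n <= stop_cost h m n /\ X h h m n <= cont_cost (X h h) m n)
    by (split; [apply X_le_stop|apply X_le_cont]; auto).
  unfold Y. apply comb_le; intro Hq'; split; try lra;
    apply subsolution_le_Xk; auto.
  - apply reachable_right; auto using reachable_origin.
  - apply reachable_up; auto using reachable_origin.
Qed.

(* If the origin lies in P(h), then G ↦ Y h G has no fixed point G ≤ h:
   placing a relay immediately at the origin would be wasteful. *)
Lemma Y_exceeds_in_P h G :
  p * (lam + h) <= Deltaq d q 0 0 -> G <= h -> G < Y h G.
Proof.
  intros HP HG. unfold Y. rewrite cont_cost_in_P by (auto; apply reachable_origin).
  pose proof (Hdd_pos 0 0). nra.
Qed.

(* The map whose fixed point is g* : threshold h, restart cost h. *)
Definition fixmap (h : R) : R := Y h h.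

Lemma fixmap_lipschitz h1 h2 :
  h1 <= h2 -> fixmap h1 <= fixmap h2 <= fixmap h1 + (1 - p) * (h2 - h1).
Proof.
  intros H. unfold fixmap.
  pose proof (Y_optimal h2 h1) as A1. pose proof (Y_optimal h1 h2) as A2.
  rewrite (Y_affine h1 h2) in A1. rewrite (Y_affine h2 h1) in A2.
  pose proof (Y_affine h1 h1). pose proof (Y_affine h2 h2).
  pose proof (slope_range h1). pose proof (slope_range h2).
  assert ((h2 - h1) * slope h1 <= (h2 - h1) * (1 - p)) by (apply Rmult_le_compat_l; lra).
  assert (0 <= (h2 - h1) * slope h2) by (apply Rmult_le_pos; lra).
  split; nra.
Qed.

(* Hence h ↦ fixmap h - h is continuous, nonnegative at 0 and nonpositive at
   fixmap 0 / p, and the intermediate value theorem gives a fixed point. *)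
Lemma fixmap_fixed_point_exists : exists hs, 0 <= hs /\ fixmap hs = hs.
Proof.
  set (f := fun h => fixmap h - h).
  assert (Hc : continuity f).
  { intros x eps Heps. exists (eps / 2). split; [lra|].
    intros y [_ Hy]. simpl in *. unfold R_dist in *. unfold f.
    destruct (Rle_dec x y) as [Hxy|Hxy].
    - pose proof (fixmap_lipschitz x y Hxy).
      rewrite Rabs_right in Hy by lra. apply Rabs_def1; nra.
    - pose proof (fixmap_lipschitz y x ltac:(lra)).
      rewrite Rabs_left in Hy by lra. apply Rabs_def1; nra. }
  pose proof (Y_nonneg_at_0 0) as H0. rewrite Y_affine, Rmult_0_l, Rplus_0_r in H0.
  fold (fixmap 0) in H0.
  set (u := fixmap 0 / p).
  assert (Hu : 0 <= u) by (apply Rmult_le_pos; [lra|apply Rlt_le, Rinv_0_lt_compat; lra]).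
  assert (Hpu : p * u = fixmap 0) by (unfold u; field; lra).
  destruct (IVT_cor f 0 u Hc Hu) as [z [Hz1 Hz2]].
  { unfold f. pose proof (fixmap_lipschitz 0 u Hu). nra. }
  exists z. unfold f in Hz2. split; lra.
Qed.

Lemma fixmap_fixed_point_unique h1 h2 : fixmap h1 = h1 -> fixmap h2 = h2 -> h1 = h2.
Proof.
  intros H1 H2. destruct (Rtotal_order h1 h2) as [H|[H|H]]; auto.
  - pose proof (fixmap_lipschitz h1 h2 ltac:(lra)). nra.
  - pose proof (fixmap_lipschitz h2 h1 ltac:(lra)). nra.
Qed.

(* At a fixed point hs of fixmap the origin lies outside P(hs), so X hs hs (0,0) = hs. *)
Lemma X_origin_fixed_point hs : fixmap hs = hs -> X hs hs 0 0 = hs.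
Proof.
  intro Hfix. assert (Hr : reachable q 0 0) by apply reachable_origin.
  destruct (Rle_dec (p * (lam + hs)) (Deltaq d q 0 0)) as [P|nP].
  - pose proof (Y_exceeds_in_P hs hs P (Rle_refl hs)). unfold fixmap in Hfix. lra.
  - now rewrite X_cont.
Qed.

Fixpoint EN (pol : policy) (N : nat) (F : history -> state -> R)
  (hist : history) (s : state) {struct N} : R :=
  match N with
  | O => F hist s
  | S N' =>
    let step (h : history) (i j : nat) : R :=
        (1 - p) * q * EN pol N' F h (Cont (S i) j)
      + p * q * EN pol N' F h (Ended (S i) j)
      + (1 - p) * (1 - q) * EN pol N' F h (Cont i (S j))
      + p * (1 - q) * EN pol N' F h (Ended i (S j)) in
    match s with
    | Phi => 0
    | Ended m n => EN pol N' F ((s, true) :: hist) Phi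
    | Cont m n =>
      let a := pol hist s in
      a * step ((s, true) :: hist) 0%nat 0%nat + (1 - a) * step ((s, false) :: hist) m n
    end
  end.

Definition stepE pol N F h i j : R :=
  comb (EN pol N F h (Cont (S i) j)) (EN pol N F h (Ended (S i) j))
       (EN pol N F h (Cont i (S j))) (EN pol N F h (Ended i (S j))).

Definition stepV pol N h i j : R :=
  comb (Vfin d p q lam pol N h (Cont (S i) j)) (Vfin d p q lam pol N h (Ended (S i) j))
       (Vfin d p q lam pol N h (Cont i (S j))) (Vfin d p q lam pol N h (Ended i (S j))).

Lemma EN_Cont pol N F hist m n : EN pol (S N) F hist (Cont m n) =
  pol hist (Cont m n) * stepE pol N F ((Cont m n, true) :: hist) 0 0
  + (1 - pol hist (Cont m n)) * stepE pol N F ((Cont m n, false) :: hist) m n.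
Proof. reflexivity. Qed.

Lemma EN_Ended pol N F hist m n :
  EN pol (S N) F hist (Ended m n) = EN pol N F ((Ended m n, true) :: hist) Phi.
Proof. reflexivity. Qed.

Lemma V_Cont pol N hist m n : Vfin d p q lam pol (S N) hist (Cont m n) =
  pol hist (Cont m n) * (stop_cost (stepV pol N ((Cont m n, true) :: hist) 0 0) m n)
  + (1 - pol hist (Cont m n)) * stepV pol N ((Cont m n, false) :: hist) m n.
Proof. reflexivity. Qed.

Lemma V_Ended pol N hist m n : Vfin d p q lam pol (S N) hist (Ended m n) =
  dd d m n + Vfin d p q lam pol N ((Ended m n, true) :: hist) Phi.
Proof. reflexivity. Qed.

Lemma V_Phi pol N hist : Vfin d p q lam pol N hist Phi = 0.
Proof. now destruct N. Qed.

Lemma V_tower pol M : forall N hist s,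
  Vfin d p q lam pol (N + M) hist s
  = Vfin d p q lam pol N hist s + EN pol N (Vfin d p q lam pol M) hist s.
Proof.
  induction N as [|N IH]; intros hist s; [simpl; ring|].
  change (S N + M)%nat with (S (N + M)). destruct s.
  - rewrite !V_Cont, EN_Cont. unfold stepV, stepE, stop_cost, comb. rewrite !IH. ring.
  - rewrite !V_Ended, EN_Ended, IH. ring.
  - simpl. ring.
Qed.

Lemma EN_linear pol a b F1 F2 : forall N hist s,
  EN pol N (fun h s => a * F1 h s + b * F2 h s) hist s
  = a * EN pol N F1 hist s + b * EN pol N F2 hist s.
Proof.
  induction N as [|N IH]; intros hist s; [reflexivity|].
  destruct s.
  - rewrite !EN_Cont. unfold stepE, comb. rewrite !IH. ring.
  - rewrite !EN_Ended. apply IH.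
  - simpl. ring.
Qed.

Definition moves_into (Inv : state -> Prop) (i j : nat) : Prop :=
  (q <> 0 -> Inv (Cont (S i) j) /\ Inv (Ended (S i) j)) /\
  (q <> 1 -> Inv (Cont i (S j)) /\ Inv (Ended i (S j))).

Definition invariant (pol : policy) (Inv : state -> Prop) : Prop :=
  Inv Phi /\ forall hist m n, Inv (Cont m n) ->
    (pol hist (Cont m n) <> 0 -> moves_into Inv 0 0) /\
    (pol hist (Cont m n) <> 1 -> moves_into Inv m n).

Lemma mix_le a X1 X2 Y1 Y2 : 0 <= a <= 1 ->
  (a <> 0 -> X1 <= X2) -> (a <> 1 -> Y1 <= Y2) -> a * X1 + (1 - a) * Y1 <= a * X2 + (1 - a) * Y2.
Proof.
  intros Ha HX HY.
  destruct (Req_dec a 0) as [a0|a0]; [subst a; specialize (HY ltac:(lra)); lra|].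
  destruct (Req_dec a 1) as [a1|a1]; [subst a; specialize (HX a0); lra|].
  specialize (HX a0). specialize (HY a1). nra.
Qed.

Lemma EN_mono pol Inv F1 F2 : valid_policy pol -> invariant pol Inv ->
  (forall h s, Inv s -> F1 h s <= F2 h s) ->
  forall N hist s, Inv s -> EN pol N F1 hist s <= EN pol N F2 hist s.
Proof.
  intros Hpol [HPhi Hinv] HF N. induction N as [|N IH]; intros hist s Hs; [simpl; auto|].
  assert (Hstep : forall h i j, moves_into Inv i j -> stepE pol N F1 h i j <= stepE pol N F2 h i j).
  { intros h i j [Hr Hu]. apply comb_le; intro Hq';
      [destruct (Hr Hq')|destruct (Hu Hq')]; split; now apply IH. }
  destruct s.
  - destruct (Hinv hist m n Hs). rewrite !EN_Cont. apply mix_le; auto.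
  - rewrite !EN_Ended. now apply IH.
  - simpl. lra.
Qed.

Definition reachable_state (s : state) : Prop :=
  match s with Cont m n | Ended m n => reachable q m n | Phi => True end.

Lemma reachable_state_invariant pol : invariant pol reachable_state.
Proof.
  split; [exact I|]. intros hist m n Hr.
  split; intros _; split; intros Hq'; split; simpl;
    auto using reachable_right, reachable_up, reachable_origin.
Qed.

Definition alive_cost (c : R) (s : state) : R := match s with Phi => 0 | _ => c end.

(* The path survives each step with probability 1 - p, whatever the policy. *)
Lemma EN_alive pol c : valid_policy pol -> 0 <= c ->
  forall N hist s, EN pol (S N) (fun _ s => alive_cost c s) hist s <= c * (1 - p) ^ N.
Proof.
  intros Hpol Hc N. induction N as [|N IH]; intros hist s.
  - destruct s; simpl; [|lra|lra]. right; ring.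
  - pose proof (pow_le (1 - p) N ltac:(lra)).
    assert (Hstep : forall h i j, stepE pol (S N) (fun _ s => alive_cost c s) h i j
                                  <= c * (1 - p) ^ S N).
    { intros h i j. unfold stepE.
      apply Rle_trans with (comb (c * (1 - p) ^ N) 0 (c * (1 - p) ^ N) 0).
      - apply comb_le; intros _; split; try apply IH;
          rewrite EN_Ended; destruct N; simpl; lra.
      - unfold comb. simpl. right. ring. }
    destruct s.
    + rewrite EN_Cont. pose proof (Hpol hist (Cont m n)).
      pose proof (Hstep ((Cont m n, true) :: hist) 0%nat 0%nat).
      pose proof (Hstep ((Cont m n, false) :: hist) m n). nra.
    + rewrite EN_Ended. cbn [EN]. apply Rmult_le_pos; [lra|apply pow_le; lra].
    + cbn [EN]. apply Rmult_le_pos; [lra|apply pow_le; lra].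
Qed.

Lemma V_nonneg pol : valid_policy pol -> forall N hist s, 0 <= Vfin d p q lam pol N hist s.
Proof.
  intros Hpol N. induction N as [|N IH]; intros hist s; [simpl; lra|].
  assert (Hstep : forall h i j, 0 <= stepV pol N h i j)
    by (intros; apply comb_nonneg; apply IH).
  destruct s.
  - rewrite V_Cont. unfold stop_cost.
    pose proof (Hpol hist (Cont m n)). pose proof (Hdd_pos m n).
    pose proof (Hstep ((Cont m n, true) :: hist) 0%nat 0%nat).
    pose proof (Hstep ((Cont m n, false) :: hist) m n). nra.
  - rewrite V_Ended, V_Phi. pose proof (Hdd_pos m n). lra.
  - rewrite V_Phi. lra.
Qed.

(* Within two steps from (m,n,c) the path ends with probability at least p,
   at a point where the relay costs at least d(m,n). *)
Lemma V2_Cont pol : valid_policy pol ->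
  forall hist m n, p * dd d m n <= Vfin d p q lam pol 2 hist (Cont m n).
Proof.
  intros Hpol hist m n. rewrite V_Cont.
  assert (Hstep : forall h i j, p * dd d i j <= stepV pol 1 h i j).
  { intros h i j. unfold stepV. rewrite !V_Ended, !V_Phi.
    apply Rle_trans with (comb 0 (dd d i j) 0 (dd d i j)); [unfold comb; right; ring|].
    apply comb_le; intros _; split; try apply V_nonneg; auto;
      rewrite Rplus_0_r; apply Hdd_mono; lia. }
  pose proof (Hstep ((Cont m n, true) :: hist) 0%nat 0%nat).
  pose proof (Hstep ((Cont m n, false) :: hist) m n).
  pose proof (Hdd_pos m n). pose proof (Hdd_pos 0 0).
  apply Rle_trans with
    (pol hist (Cont m n) * (p * dd d m n) + (1 - pol hist (Cont m n)) * (p * dd d m n));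
    [right; ring|].
  apply mix_le; [apply Hpol| |]; intros _; unfold stop_cost; nra.
Qed.

Lemma V2_Ended pol hist m n : Vfin d p q lam pol 2 hist (Ended m n) = dd d m n.
Proof. rewrite V_Ended, V_Phi. ring. Qed.

Definition Vof (Z : nat -> nat -> R) (s : state) : R :=
  match s with Cont m n => Z m n | Ended m n => dd d m n | Phi => 0 end.

Lemma bellman_lower pol Z : valid_policy pol ->
  (forall m n, reachable q m n ->
     Z m n <= stop_cost (cont_cost Z 0 0) m n /\ Z m n <= cont_cost Z m n) ->
  forall N hist s, reachable_state s ->
    Vof Z s <= Vfin d p q lam pol N hist s + EN pol N (fun _ s => Vof Z s) hist s.
Proof.
  intros Hpol HZ N. induction N as [|N IH]; intros hist s Hs; [simpl; lra|].
  destruct s.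
  - assert (Hstep : forall h i j, reachable q i j ->
        cont_cost Z i j <= stepV pol N h i j + stepE pol N (fun _ s => Vof Z s) h i j).
    { intros h i j Hij. unfold stepV, stepE.
      apply Rle_trans with (comb
        (Vfin d p q lam pol N h (Cont (S i) j) + EN pol N (fun _ s => Vof Z s) h (Cont (S i) j))
        (Vfin d p q lam pol N h (Ended (S i) j) + EN pol N (fun _ s => Vof Z s) h (Ended (S i) j))
        (Vfin d p q lam pol N h (Cont i (S j)) + EN pol N (fun _ s => Vof Z s) h (Cont i (S j)))
        (Vfin d p q lam pol N h (Ended i (S j)) + EN pol N (fun _ s => Vof Z s) h (Ended i (S j)))).
      - apply comb_le; intro Hq'; split;
          [apply (IH h (Cont (S i) j))|apply (IH h (Ended (S i) j))
          |apply (IH h (Cont i (S j)))|apply (IH h (Ended i (S j)))];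
          simpl; auto using reachable_right, reachable_up.
      - unfold comb; right; ring. }
    pose proof (Hstep ((Cont m n, true) :: hist) 0%nat 0%nat (reachable_origin q)).
    pose proof (Hstep ((Cont m n, false) :: hist) m n Hs).
    destruct (HZ m n Hs) as [HZ1 HZ2].
    rewrite V_Cont, EN_Cont. simpl Vof at 1. unfold stop_cost in *.
    set (a := pol hist (Cont m n)).
    set (F := fun (_ : history) (s : state) => Vof Z s) in *.
    apply Rle_trans with
      (a * (lam + dd d m n + (stepV pol N ((Cont m n, true) :: hist) 0 0
                              + stepE pol N F ((Cont m n, true) :: hist) 0 0))
       + (1 - a) * (stepV pol N ((Cont m n, false) :: hist) m n
                    + stepE pol N F ((Cont m n, false) :: hist) m n));
      [|right; ring].
    apply Rle_trans with (a * Z m n + (1 - a) * Z m n); [right; ring|].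
    apply mix_le; [apply Hpol| |]; intros _; lra.
  - rewrite V_Ended, EN_Ended. pose proof (IH ((Ended m n, true) :: hist) Phi I).
    simpl in *. lra.
  - simpl. lra.
Qed.

Lemma Vof_X_le hs pol hist s : fixmap hs = hs -> 0 <= hs -> valid_policy pol ->
  reachable_state s ->
  Vof (X hs hs) s
  <= 1 * alive_cost (lam + hs) s + / p * Vfin d p q lam pol 2 hist s.
Proof.
  intros Hfix Hhs Hpol Hs.
  assert (Hinvp : 1 <= / p) by (rewrite <- Rinv_1; apply Rinv_le_contravar; lra).
  destruct s; cbn [Vof alive_cost].
  - assert (dd d m n <= / p * Vfin d p q lam pol 2 hist (Cont m n)).
    { replace (dd d m n) with (/ p * (p * dd d m n)) by (field; lra).
      apply Rmult_le_compat_l; [apply Rlt_le, Rinv_0_lt_compat; lra|].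
      now apply V2_Cont. }
    pose proof (X_le_stop hs m n Hs). unfold stop_cost in *. lra.
  - rewrite V2_Ended. pose proof (Hdd_pos m n). nra.
  - rewrite V_Phi. lra.
Qed.

Lemma cost_lower_bound hs pol : fixmap hs = hs -> 0 <= hs -> valid_policy pol ->
  forall N, hs <= Vfin d p q lam pol (N + 1) nil (Cont 0 0) + (lam + hs) * (1 - p) ^ N
                 + / p * (Vfin d p q lam pol (N + 3) nil (Cont 0 0)
                          - Vfin d p q lam pol (N + 1) nil (Cont 0 0)).
Proof.
  intros Hfix Hhs Hpol N.
  assert (HZ : forall m n, reachable q m n ->
            X hs hs m n <= stop_cost (cont_cost (X hs hs) 0 0) m n
            /\ X hs hs m n <= cont_cost (X hs hs) m n).
  { intros m n Hr. fold (Y hs hs) (fixmap hs). rewrite Hfix.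
    split; [apply X_le_stop|apply X_le_cont]; auto. }
  pose proof (bellman_lower pol (X hs hs) Hpol HZ (N + 1) nil (Cont 0 0) (reachable_origin q))
    as Hbell.
  cbn [Vof] in Hbell. rewrite X_origin_fixed_point in Hbell by auto.
  pose proof (EN_mono pol reachable_state _ _ Hpol (reachable_state_invariant pol)
     (fun h s Hs => Vof_X_le hs pol h s Hfix Hhs Hpol Hs) (N + 1) nil (Cont 0 0)
     (reachable_origin q)) as Hmaj.
  rewrite EN_linear in Hmaj.
  replace (N + 1)%nat with (S N) in Hmaj at 2 by lia.
  pose proof (EN_alive pol (lam + hs) Hpol ltac:(lra) N nil (Cont 0 0)).
  pose proof (V_tower pol 2 (N + 1) nil (Cont 0 0)) as Htower.
  replace (N + 1 + 2)%nat with (N + 3)%nat in Htower by lia.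
  rewrite Htower. lra.
Qed.

Lemma policy_cost_ge hs pol c : fixmap hs = hs -> 0 <= hs -> valid_policy pol ->
  total_cost_is d p q lam pol 0 0 c -> hs <= c.
Proof.
  intros Hfix Hhs Hpol Hc.
  set (V := fun N => Vfin d p q lam pol N nil (Cont 0 0)).
  assert (Hlim : Un_cv (fun N => V (N + 1)%nat + (lam + hs) * (1 - p) ^ N
                                 + / p * (V (N + 3)%nat - V (N + 1)%nat))
                       (c + (lam + hs) * 0 + / p * (c - c))).
  { apply CV_plus; [apply CV_plus|apply CV_mult; [apply Un_cv_const|apply CV_minus]];
      try (apply CV_shift'; exact Hc).
    apply CV_mult; [apply Un_cv_const|apply Un_cv_pow; lra]. }
  replace c with (c + (lam + hs) * 0 + / p * (c - c)) by ring.
  exact (Rle_cv_lim (cost_lower_bound hs pol Hfix Hhs Hpol) (Un_cv_const hs) Hlim).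
Qed.

Definition within (K : nat) (s : state) : Prop :=
  match s with Cont m n | Ended m n => reachable q m n /\ (m + n <= K)%nat | Phi => True end.

(* The threshold-h policy never leaves the levels below [level h]: beyond it,
   it always places a relay and returns to the origin. *)
Lemma threshold_within_invariant h :
  invariant (thr_policy d p q lam h) (within (level h)).
Proof.
  destruct (level_spec h) as [HK _].
  split; [exact I|]. intros hist m n [Hr Hmn]. cbn [thr_policy].
  destruct Rle_dec as [P|nP]; split; intros Ha;
    try (exfalso; now apply Ha).
  - split; intros Hq'; split; split; auto using reachable_right, reachable_up, reachable_origin; lia.
  - pose proof (below_level h m n Hr nP).
    split; intros Hq'; split; split; auto using reachable_right, reachable_up; lia.
Qed.

Lemma thr_valid h : valid_policy (thr_policy d p q lam h).
Proof. intros hist s. destruct s; cbn [thr_policy]; try destruct Rle_dec; lra. Qed.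

Lemma threshold_bellman h G : G = Y h G -> forall N hist s, within (level h) s ->
  Vfin d p q lam (thr_policy d p q lam h) N hist s
  + EN (thr_policy d p q lam h) N (fun _ s => Vof (X h G) s) hist s = Vof (X h G) s.
Proof.
  intros HG. set (pol := thr_policy d p q lam h).
  set (F := fun (_ : history) s => Vof (X h G) s).
  destruct (threshold_within_invariant h) as [_ Hinv].
  intro N. induction N as [|N IH]; intros hist s Hs; [simpl; unfold F; ring|].
  destruct s.
  - assert (Hstep : forall hh i j, moves_into (within (level h)) i j ->
        stepV pol N hh i j + stepE pol N F hh i j = cont_cost (X h G) i j).
    { intros hh i j [Hr Hu]. unfold stepV, stepE, cont_cost.
      transitivity (comb
        (Vfin d p q lam pol N hh (Cont (S i) j) + EN pol N F hh (Cont (S i) j))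
        (Vfin d p q lam pol N hh (Ended (S i) j) + EN pol N F hh (Ended (S i) j))
        (Vfin d p q lam pol N hh (Cont i (S j)) + EN pol N F hh (Cont i (S j)))
        (Vfin d p q lam pol N hh (Ended i (S j)) + EN pol N F hh (Ended i (S j))));
        [unfold comb; ring|].
      apply comb_eq; intro Hq';
        [destruct (Hr Hq') as [H1 H2]|destruct (Hu Hq') as [H1 H2]];
        split; [apply (IH hh _ H1)|apply (IH hh _ H2)|apply (IH hh _ H1)|apply (IH hh _ H2)]. }
    destruct (Hinv hist m n Hs) as [Hstop Hcont]. destruct Hs as [Hr _].
    rewrite V_Cont, EN_Cont. cbn [Vof]. unfold pol in *; cbn [thr_policy] in *.
    revert Hstop Hcont. destruct Rle_dec as [P|nP]; intros Hstop Hcont.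
    + rewrite X_stop by auto.
      pose proof (Hstep ((Cont m n, true) :: hist) 0%nat 0%nat (Hstop ltac:(intro; lra))).
      fold (Y h G) in H. unfold stop_cost. lra.
    + rewrite X_cont by auto.
      pose proof (Hstep ((Cont m n, false) :: hist) m n (Hcont ltac:(intro; lra))). lra.
  - pose proof (IH ((Ended m n, true) :: hist) Phi I) as E.
    rewrite V_Ended, EN_Ended, V_Phi in *. cbn [Vof] in *. lra.
  - rewrite V_Phi. simpl. ring.
Qed.

Lemma X_bounded h G : 0 <= G -> forall m n, reachable q m n -> (m + n <= level h)%nat ->
  X h G m n <= stop_cost G (level h) (level h).
Proof.
  intros HG.
  assert (Hstop : forall m n, (m + n <= level h)%nat ->
            stop_cost G m n <= stop_cost G (level h) (level h)).
  { intros m n Hmn. unfold stop_cost.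
    pose proof (Hdd_mono m n (level h) (level h) ltac:(lia) ltac:(lia)). lra. }
  unfold X. generalize (level h) at 2 as k. intro k.
  induction k as [|k IH]; intros m n Hr Hmn; simpl; [now apply Hstop|].
  destruct Rle_dec as [P|nP]; [now apply Hstop|].
  pose proof (below_level h m n Hr nP).
  set (T := stop_cost G (level h) (level h)).
  assert (Hdd : forall i j, (i + j <= level h)%nat -> dd d i j <= T)
    by (intros i j Hij; pose proof (Hstop i j Hij); unfold T, stop_cost in *; lra).
  rewrite <- (comb_const T). apply comb_le; intro Hq'; split;
    [apply IH; [now apply reachable_right|lia] | apply Hdd; lia
    |apply IH; [now apply reachable_up|lia] | apply Hdd; lia].
Qed.

Lemma EN_zero pol : forall N hist s, EN pol N (fun _ _ => 0) hist s = 0.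
Proof.
  induction N as [|N IH]; intros hist s; [reflexivity|].
  destruct s; simpl; rewrite ?IH; ring.
Qed.

(* With a self-consistent restart cost G ≥ 0, the total cost of the threshold
   policy is X h G (0,0): the remaining expected cost vanishes geometrically. *)
Lemma threshold_cost h G : G = Y h G -> 0 <= G ->
  total_cost_is d p q lam (thr_policy d p q lam h) 0 0 (X h G 0 0).
Proof.
  intros HG HG0. set (pol := thr_policy d p q lam h).
  set (B := stop_cost G (level h) (level h)).
  set (F := fun (_ : history) s => Vof (X h G) s).
  assert (HB : 0 <= B) by (unfold B, stop_cost; pose proof (Hdd_pos (level h) (level h)); lra).
  assert (HF : forall hh s, within (level h) s -> 0 <= F hh s <= alive_cost B s).
  { intros hh s Hs. destruct s; cbn [F Vof alive_cost]; [destruct Hs as [Hr Hmn]..|lra].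
    - split; [now apply Xk_nonneg|now apply X_bounded].
    - pose proof (Hdd_pos m n). pose proof (Hdd_mono m n (level h) (level h) ltac:(lia) ltac:(lia)).
      unfold B, stop_cost. lra. }
  assert (Hwithin : within (level h) (Cont 0 0)) by (split; [apply reachable_origin|lia]).
  apply (Un_cv_geometric_error _ _ B (1 - p)); [lra|]. intro N.
  pose proof (threshold_bellman h G HG (S N) nil (Cont 0 0) Hwithin) as E.
  cbn [Vof] in E. fold pol F in E.
  pose proof (EN_mono pol _ _ _ (thr_valid h) (threshold_within_invariant h)
                (fun hh s Hs => proj2 (HF hh s Hs)) (S N) nil (Cont 0 0) Hwithin) as Hupper.
  pose proof (EN_mono pol _ (fun _ _ => 0) F (thr_valid h) (threshold_within_invariant h)
                (fun hh s Hs => proj1 (HF hh s Hs)) (S N) nil (Cont 0 0) Hwithin) as Hlower.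
  rewrite EN_zero in Hlower.
  pose proof (EN_alive pol B (thr_valid h) HB N nil (Cont 0 0)) as Hdecay.
  rewrite Rabs_left1; lra.
Qed.

Lemma g_at_fixed_point hs : fixmap hs = hs -> 0 <= hs -> g_is d p q lam hs hs.
Proof.
  intros Hfix Hhs. unfold g_is.
  rewrite <- (X_origin_fixed_point hs Hfix) at 2.
  apply threshold_cost; auto.
Qed.

Lemma J_at_fixed_point hs : fixmap hs = hs -> 0 <= hs -> is_J d p q lam 0 0 hs.
Proof.
  intros Hfix Hhs. split.
  - intros pol Hpol c Hc. exact (policy_cost_ge hs pol c Hfix Hhs Hpol Hc).
  - intros eps Heps. exists (thr_policy d p q lam hs). split; [apply thr_valid|].
    exists hs. split; [apply g_at_fixed_point; auto|lra].
Qed.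

(* Conversely, every fixed point of g is a fixed point of fixmap: the
   self-consistent restart cost G = Y h G (explicit, as Y h is affine with
   slope < 1) must equal the total cost h of the threshold-h policy. *)
Lemma g_fixed_point_is_fixmap h : g_is d p q lam h h -> fixmap h = h.
Proof.
  intros Hg. pose proof (slope_range h) as Hs. pose proof (Y_nonneg_at_0 h).
  set (G := Y h 0 / (1 - slope h)).
  assert (HG : G = Y h G) by (rewrite (Y_affine h G); unfold G; field; lra).
  assert (HG0 : 0 <= G)
    by (apply Rmult_le_pos; [lra|apply Rlt_le, Rinv_0_lt_compat; lra]).
  assert (E : h = X h G 0 0) by exact (UL_sequence _ _ _ Hg (threshold_cost h G HG HG0)).
  assert (Hr : reachable q 0 0) by apply reachable_origin.
  destruct (Rle_dec (p * (lam + h)) (Deltaq d q 0 0)) as [P|nP].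
  - rewrite X_stop in E by auto. unfold stop_cost in E.
    pose proof (Y_exceeds_in_P h G P ltac:(pose proof (Hdd_pos 0 0); lra)). lra.
  - rewrite X_cont in E by auto. fold (Y h G) in E. rewrite <- HG in E.
    unfold fixmap. transitivity (Y h G); [now rewrite <- E|].
    rewrite <- HG. now symmetry.
Qed.

Theorem fixed_point_characterization : exists gstar,
  is_J d p q lam 0 0 gstar /\ g_is d p q lam gstar gstar /\
  (forall h, 0 <= h -> h <> gstar -> ~ g_is d p q lam h h).
Proof.
  destruct fixmap_fixed_point_exists as [hs [Hhs Hfix]].
  exists hs. split; [|split].
  - now apply J_at_fixed_point.
  - now apply g_at_fixed_point.
  - intros h _ Hne Hg. apply Hne, fixmap_fixed_point_unique; auto.
    now apply g_fixed_point_is_fixmap.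
Qed.

End RelayMDP.

Theorem lemma4 (d : R -> R) (p q lam : R)
  (Hp : 0 < p < 1) (Hq : 0 <= q <= 1) (Hlam : 0 < lam)
  (HC1 : 0 < d 0)
  (HC2 : convex_on_nonneg d /\ increasing_on_nonneg d)
  (HC3 : C3 d) (HC4 : C4 d) :
  exists gstar,
    is_J d p q lam 0 0 gstar /\
    g_is d p q lam gstar gstar /\
    (forall h, 0 <= h -> h <> gstar -> ~ g_is d p q lam h h).
Proof.
  destruct HC2 as [Hconv Hinc].
  apply fixed_point_characterization; auto.
  - exact (dd_pos d HC1 Hinc).
  - exact (dd_mono d Hinc).
  - exact (Deltaq_mono d Hconv Hinc HC4 q Hq).
  - exact (fun T => Deltaq_large d Hinc HC3 q Hq T).
Qed.
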